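(* Let $\rho:E\to B$ be a stream covering. (1) $E$ is path-ordered if and only if $B$ is path-ordered. (2) For each $e\in E$, every homotopy through dipaths on $B$ starting at $\rho(e)$ (i.e. a continuous $H:[0,1]\times[0,1]\to B$ such that each $H(s,-)$ is a dipath, with $H(0,0)=\rho(e)$) lifts under $\rho$ to a unique homotopy through dipaths $\tilde H$ on $E$ with $\rho\circ\tilde H=H$ and $\tilde H(0,0)=e$; likewise for homotopies ending at $\rho(e)$ (with $(0,0)$ replaced by $(0,1)$).
   Context: Streams: a circulation on a space $X$ assigns to each open $V\subset X$ a preorder $\leqslant_V$ such that for every collection $\mathcal{O}$ of open sets, $\leqslant_{\bigcup\mathcal{O}}$ is the preorder with smallest graph containing $\bigcup_{V\in\mathcal{O}}\mathrm{graph}(\leqslant_V)$; a stream is a space with a circulation; a stream map $f:X\to Y$ is continuous with $f(x)\leqslant_V f(y)$ whenever $x\leqslant_{f^{-1}V}y$. An open substream of $X$ is an open $V$ with circulation $W\mapsto\leqslant_W$. A stream covering is a surjective stream map $\rho:E\to B$ such that $B$ is covered by open substreams whose preimages are disjoint unions of open substreams each mapped by $\rho$ isomorphically (as streams) onto the corresponding open substream. $\vec\square[1]$ is $[0,1]$ with circulation $x\leqslant_V y$ iff $x\le y$ and $[x,y]\subset V$; a dipath on $X$ is a stream map $\vec\square[1]\to X$. $X$ is path-ordered if whenever $V\subset X$ is open and $x\leqslant_V y$ there is a dipath from $x$ to $y$ with image in $V$. *)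

From Stdlib Require Import Reals.
Open Scope R_scope.
Set Implicit Arguments.

Record PreStream := {
  pt : Type;
  opn : (pt -> Prop) -> Prop;
  circ : (pt -> Prop) -> pt -> pt -> Prop
}.

Definition bigunion {X : Type} (O : (X -> Prop) -> Prop) : X -> Prop :=
  fun x => exists U, O U /\ U x.

Definition is_topology (X : PreStream) : Prop :=
  opn X (fun _ => True) /\
  (forall O : (pt X -> Prop) -> Prop,
      (forall U, O U -> opn X U) -> opn X (bigunion O)) /\
  (forall U V, opn X U -> opn X V -> opn X (fun x => U x /\ V x)).

Definition preorder_on {X : Type} (V : X -> Prop) (R : X -> X -> Prop) : Prop :=
  (forall x y, R x y -> V x /\ V y) /\
  (forall x, V x -> R x x) /\
  (forall x y z, R x y -> R y z -> R x z).

Definition is_circulation (X : PreStream) : Prop :=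
  (forall V, opn X V -> preorder_on V (circ X V)) /\
  (forall O : (pt X -> Prop) -> Prop, (forall U, O U -> opn X U) ->
     (forall U, O U -> forall x y, circ X U x y -> circ X (bigunion O) x y) /\
     (forall R, preorder_on (bigunion O) R ->
        (forall U, O U -> forall x y, circ X U x y -> R x y) ->
        forall x y, circ X (bigunion O) x y -> R x y)).

Definition is_stream (X : PreStream) : Prop := is_topology X /\ is_circulation X.

Definition continuous (X Y : PreStream) (f : pt X -> pt Y) : Prop :=
  forall V, opn Y V -> opn X (fun x => V (f x)).

Definition stream_map (X Y : PreStream) (f : pt X -> pt Y) : Prop :=
  continuous X Y f /\
  forall V, opn Y V -> forall x y,
    circ X (fun z => V (f z)) x y -> circ Y V (f x) (f y).

Definition stream_iso (X Y : PreStream) (f : pt X -> pt Y) : Prop :=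
  exists g : pt Y -> pt X,
    (forall x, g (f x) = x) /\ (forall y, f (g y) = y) /\
    stream_map X Y f /\ stream_map Y X g.

Definition sub (X : PreStream) (V : pt X -> Prop) : PreStream := {|
  pt := {x : pt X | V x};
  opn := fun W' => exists W, opn X W /\ forall z, W' z <-> W (proj1_sig z);
  circ := fun W' a b =>
    circ X (fun x => exists h : V x, W' (exist _ x h)) (proj1_sig a) (proj1_sig b)
|}.

Definition stream_covering (E B : PreStream) (rho : pt E -> pt B) : Prop :=
  stream_map E B rho /\
  (forall b, exists e, rho e = b) /\
  forall b, exists V, opn B V /\ V b /\
    exists F : (pt E -> Prop) -> Prop,
      (forall U, F U -> opn E U) /\
      (forall e, V (rho e) <-> bigunion F e) /\
      (forall U1 U2, F U1 -> F U2 -> forall e, U1 e -> U2 e ->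
         forall e', U1 e' <-> U2 e') /\
      (forall U, F U -> exists phi : pt (sub E U) -> pt (sub B V),
         (forall u, proj1_sig (phi u) = rho (proj1_sig u)) /\
         stream_iso (sub E U) (sub B V) phi).

Definition I : Type := {t : R | 0 <= t <= 1}.
Definition I0 : I := exist _ 0 (conj (Rle_refl 0) Rle_0_1).
Definition I1 : I := exist _ 1 (conj Rle_0_1 (Rle_refl 1)).

Definition I_open (W : I -> Prop) : Prop :=
  forall t, W t -> exists eps, eps > 0 /\
    forall s : I, Rabs (proj1_sig s - proj1_sig t) < eps -> W s.

Definition vec_I : PreStream := {|
  pt := I;
  opn := I_open;
  circ := fun V x y => proj1_sig x <= proj1_sig y /\
            forall t : I, proj1_sig x <= proj1_sig t <= proj1_sig y -> V t
|}.

Definition dipath (X : PreStream) (g : I -> pt X) : Prop := stream_map vec_I X g.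

Definition path_ordered (X : PreStream) : Prop :=
  forall V, opn X V -> forall x y, circ X V x y ->
    exists g : I -> pt X, dipath X g /\ g I0 = x /\ g I1 = y /\
      forall t, V (g t).

Definition sq_open (W : I * I -> Prop) : Prop :=
  forall p, W p -> exists eps, eps > 0 /\
    forall q : I * I,
      Rabs (proj1_sig (fst q) - proj1_sig (fst p)) < eps ->
      Rabs (proj1_sig (snd q) - proj1_sig (snd p)) < eps -> W q.

Definition dihomotopy (X : PreStream) (H : I * I -> pt X) : Prop :=
  (forall V, opn X V -> sq_open (fun p => V (H p))) /\
  (forall s, dipath X (fun t => H (s, t))).

(* Let rho : E -> B be a stream covering.  Every point of B has an open
   neighbourhood V that is evenly covered: rho^-1 V is a disjoint union of
   sheets U, and on each sheet rho is a stream isomorphism onto V.  Inverting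
   these isomorphisms gives local sections sg : V -> U that are continuous and
   transport the circulations in both directions (the record [sheet]). *)

From Stdlib Require Import Reals Lra ClassicalEpsilon FunctionalExtensionality
  PropExtensionality ProofIrrelevance Classical.
Open Scope R_scope.

Lemma pred_ext {X : Type} (P Q : X -> Prop) : (forall x, P x <-> Q x) -> P = Q.
Proof.
  intros H; apply functional_extensionality; intros x.
  apply propositional_extensionality; apply H.
Qed.

Lemma sig_eq {X : Type} (P : X -> Prop) (a b : {x | P x}) :
  proj1_sig a = proj1_sig b -> a = b.
Proof. destruct a as [a ha], b as [b hb]; simpl; intros ->; f_equal; apply proof_irrelevance. Qed.

Lemma I_eq (s t : I) : proj1_sig s = proj1_sig t -> s = t.
Proof. apply sig_eq. Qed.

Lemma I_bnd (t : I) : 0 <= proj1_sig t <= 1.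
Proof. exact (proj2_sig t). Qed.

(* Connectedness of [a,b]: a relatively clopen subset containing a is everything.
   The proof considers the supremum c of the x such that [a,x] lies in P. *)
Lemma interval_connected (a b : R) (P : R -> Prop) : a <= b -> P a ->
  (forall u, a <= u <= b -> P u ->
     exists eps, eps > 0 /\ forall v, a <= v <= b -> Rabs (v - u) < eps -> P v) ->
  (forall u, a <= u <= b -> ~ P u ->
     exists eps, eps > 0 /\ forall v, a <= v <= b -> Rabs (v - u) < eps -> ~ P v) ->
  forall u, a <= u <= b -> P u.
Proof.
  intros hab Pa Popen Pclosed.
  set (S := fun x => a <= x <= b /\ forall w, a <= w <= x -> P w).
  assert (Sa : S a) by (split; [lra|]; intros w hw; replace w with a by lra; exact Pa).
  assert (Sbnd : bound S) by (exists b; intros x [hx _]; lra).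
  destruct (completeness S Sbnd (ex_intro _ a Sa)) as [c [c_ub c_least]].
  assert (hac : a <= c) by (apply c_ub; exact Sa).
  assert (hcb : c <= b) by (apply c_least; intros x [hx _]; lra).
  assert (below : forall w, a <= w < c -> P w).
  { intros w hw. destruct (classic (exists x, S x /\ w <= x)) as [[x [[_ hx] hwx]]|hn].
    - apply hx; lra.
    - exfalso. enough (c <= w) by lra. apply c_least. intros x hx.
      destruct (Rle_dec x w); [lra|]. exfalso; apply hn; exists x; split; [auto|lra]. }
  assert (Pc : P c).
  { apply NNPP; intros nPc. destruct (Pclosed c ltac:(lra) nPc) as [eps [heps Heps]].
    destruct (Req_dec c a) as [->|hca]; [contradiction|].
    set (w := Rmax a (c - eps/2)).
    assert (hw : a <= w < c) by (unfold w, Rmax; destruct Rle_dec; lra).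
    apply (Heps w); [lra| |apply below; lra].
    unfold w, Rmax; destruct Rle_dec; apply Rabs_def1; lra. }
  assert (upto : forall w, a <= w <= c -> P w).
  { intros w hw. destruct (Req_dec w c) as [->|hne]; [exact Pc|apply below; lra]. }
  assert (hc : c = b).
  { apply NNPP; intros hne. destruct (Popen c ltac:(lra) Pc) as [eps [heps Heps]].
    set (x := Rmin b (c + eps/2)).
    assert (hx : c < x <= b /\ x < c + eps) by (unfold x, Rmin; destruct Rle_dec; lra).
    enough (S x) by (pose proof (c_ub x ltac:(assumption)); lra).
    split; [lra|]. intros w hw. destruct (Rle_dec w c); [apply upto; lra|].
    apply Heps; [lra|apply Rabs_def1; lra]. }
  subst c. exact upto.
Qed.

Lemma interval_induction (P : R -> Prop) : P 0 ->
  (forall r r', r' <= r -> P r -> P r') ->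
  (forall u, 0 <= u <= 1 -> exists eta, eta > 0 /\ forall x y, 0 <= x <= y -> y <= 1 ->
     Rabs (x - u) < eta -> Rabs (y - u) < eta -> P x -> P y) ->
  P 1.
Proof.
  intros P0 down step. apply (interval_connected 0 1 P); try lra; auto.
  - intros u hu Pu. destruct (step u hu) as [eta [heta Heta]]. exists eta; split; auto.
    intros v hv hvu. destruct (Rle_dec v u); [apply (down u); auto|].
    apply (Heta u v); auto; try lra. rewrite Rminus_diag, Rabs_R0; lra.
  - intros u hu nPu. destruct (step u hu) as [eta [heta Heta]]. exists eta; split; auto.
    intros v hv hvu Pv. apply nPu. destruct (Rle_dec u v); [apply (down v); auto|].
    apply (Heta v u); auto; try lra. rewrite Rminus_diag, Rabs_R0; lra.
Qed.

Definition clamp (a b r : R) : R := Rmax a (Rmin r b).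

Lemma clamp_bnd a b r : a <= b -> a <= clamp a b r <= b.
Proof. intros; unfold clamp, Rmax, Rmin; repeat destruct Rle_dec; lra. Qed.

Lemma clamp_id a b r : a <= r <= b -> clamp a b r = r.
Proof. intros; unfold clamp, Rmax, Rmin; repeat destruct Rle_dec; lra. Qed.

Lemma clamp_lip a b r r' : a <= b -> Rabs (clamp a b r - clamp a b r') <= Rabs (r - r').
Proof.
  intros; unfold clamp, Rmax, Rmin; repeat destruct Rle_dec;
  unfold Rabs; repeat destruct Rcase_abs; lra.
Qed.

Definition mkI (r : R) : I := exist _ (clamp 0 1 r) (clamp_bnd 0 1 r Rle_0_1).

Lemma mkI_val r : 0 <= r <= 1 -> proj1_sig (mkI r) = r.
Proof. intros; simpl; apply clamp_id; auto. Qed.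

Lemma mkI_proj (t : I) : mkI (proj1_sig t) = t.
Proof. apply I_eq. apply mkI_val. apply I_bnd. Qed.

Lemma mkI_lip r r' : Rabs (proj1_sig (mkI r) - proj1_sig (mkI r')) <= Rabs (r - r').
Proof. simpl; apply clamp_lip; lra. Qed.

Lemma I_connected (a b : R) (P : I -> Prop) : 0 <= a <= b -> b <= 1 ->
  (forall t, proj1_sig t = a -> P t) ->
  (forall u, a <= proj1_sig u <= b -> P u -> exists eps, eps > 0 /\ forall v,
     a <= proj1_sig v <= b -> Rabs (proj1_sig v - proj1_sig u) < eps -> P v) ->
  (forall u, a <= proj1_sig u <= b -> ~ P u -> exists eps, eps > 0 /\ forall v,
     a <= proj1_sig v <= b -> Rabs (proj1_sig v - proj1_sig u) < eps -> ~ P v) ->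
  forall u, a <= proj1_sig u <= b -> P u.
Proof.
  intros ha hb P0 Popen Pclosed.
  assert (H : forall r, a <= r <= b -> P (mkI r)).
  { apply (interval_connected a b (fun r => P (mkI r))); [lra|apply P0, mkI_val; lra| |].
    - intros u hu Pu. destruct (Popen (mkI u)) as [eps [he Heps]]; [rewrite mkI_val; lra|auto|].
      exists eps; split; auto. intros v hv hvu. apply Heps; rewrite ?mkI_val; lra.
    - intros u hu Pu. destruct (Pclosed (mkI u)) as [eps [he Heps]]; [rewrite mkI_val; lra|auto|].
      exists eps; split; auto. intros v hv hvu. apply Heps; rewrite ?mkI_val; lra. }
  intros u hu. rewrite <- (mkI_proj u). apply H. auto.
Qed.

Definition cont_at (X : PreStream) (f : I -> pt X) (t : I) : Prop :=
  forall W, opn X W -> W (f t) -> exists eps, eps > 0 /\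
    forall u : I, Rabs (proj1_sig u - proj1_sig t) < eps -> W (f u).

Definition cont2 (X : PreStream) (H : I * I -> pt X) (p : I * I) : Prop :=
  forall W, opn X W -> W (H p) -> exists eps, eps > 0 /\
    forall q : I * I,
      Rabs (proj1_sig (fst q) - proj1_sig (fst p)) < eps ->
      Rabs (proj1_sig (snd q) - proj1_sig (snd p)) < eps -> W (H q).

Lemma continuous_iff X f : continuous vec_I X f <-> forall t, cont_at X f t.
Proof.
  unfold continuous, cont_at; simpl; unfold I_open; split.
  - intros H t W hW hWt. exact (H W hW t hWt).
  - intros H W hW t hWt. exact (H t W hW hWt).
Qed.

Lemma sq_continuous_iff X H :
  (forall W, opn X W -> sq_open (fun p => W (H p))) <-> forall p, cont2 X H p.
Proof.
  unfold cont2, sq_open; split.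
  - intros Hc p W hW hWp. exact (Hc W hW p hWp).
  - intros Hc W hW p hWp. exact (Hc p W hW hWp).
Qed.

Lemma cont_at_comp X (f : I -> pt X) (g : I -> I) K u : K > 0 ->
  (forall u', Rabs (proj1_sig (g u') - proj1_sig (g u)) <= K * Rabs (proj1_sig u' - proj1_sig u)) ->
  cont_at X f (g u) -> cont_at X (fun t => f (g t)) u.
Proof.
  intros hK hg hf W hW hWu. destruct (hf W hW hWu) as [eps [he Heps]].
  exists (eps / K); split; [apply Rdiv_lt_0_compat; lra|].
  intros u' hu'. apply Heps. specialize (hg u').
  apply (Rmult_lt_compat_l K) in hu'; [|lra]. field_simplify in hu'; lra.
Qed.

Lemma cont2_comp X (H : I * I -> pt X) (g : I -> I * I) K u : K > 0 ->
  (forall u', Rabs (proj1_sig (fst (g u')) - proj1_sig (fst (g u))) <= K * Rabs (proj1_sig u' - proj1_sig u)) ->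
  (forall u', Rabs (proj1_sig (snd (g u')) - proj1_sig (snd (g u))) <= K * Rabs (proj1_sig u' - proj1_sig u)) ->
  cont2 X H (g u) -> cont_at X (fun t => H (g t)) u.
Proof.
  intros hK hg1 hg2 hf W hW hWu. destruct (hf W hW hWu) as [eps [he Heps]].
  exists (eps / K); split; [apply Rdiv_lt_0_compat; lra|].
  intros u' hu'. apply (Rmult_lt_compat_l K) in hu'; [|lra]. field_simplify in hu'; [|lra].
  apply Heps; [specialize (hg1 u')|specialize (hg2 u')]; lra.
Qed.

Lemma slice_cont X (H : I * I -> pt X) s t :
  cont2 X H (s, t) -> cont_at X (fun u => H (s, u)) t.
Proof.
  intros h. apply (cont2_comp X H (fun u => (s, u)) 1 t); simpl; auto; [lra| |intros; lra].
  intros; rewrite Rminus_diag, Rabs_R0; pose proof (Rabs_pos (proj1_sig u' - proj1_sig t)); lra.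
Qed.

Lemma slice_cont_fst X (H : I * I -> pt X) s t :
  cont2 X H (s, t) -> cont_at X (fun u => H (u, t)) s.
Proof.
  intros h. apply (cont2_comp X H (fun u => (u, t)) 1 s); simpl; auto; [lra|intros; lra|].
  intros; rewrite Rminus_diag, Rabs_R0; pose proof (Rabs_pos (proj1_sig u' - proj1_sig s)); lra.
Qed.

Lemma cont2_local X (H K : I * I -> pt X) (p : I * I) d : d > 0 ->
  (forall q : I * I, Rabs (proj1_sig (fst q) - proj1_sig (fst p)) < d ->
     Rabs (proj1_sig (snd q) - proj1_sig (snd p)) < d -> H q = K q) ->
  cont2 X K p -> cont2 X H p.
Proof.
  intros hd hHK hK W hW hWp. rewrite hHK in hWp by (rewrite Rminus_diag, Rabs_R0; lra).
  destruct (hK W hW hWp) as [eps [he Heps]].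
  exists (Rmin eps d); split; [apply Rmin_glb_lt; lra|].
  intros q h1 h2. pose proof (Rmin_l eps d); pose proof (Rmin_r eps d).
  rewrite hHK by lra. apply Heps; lra.
Qed.

Lemma const_cont X (x : pt X) t : cont_at X (fun _ => x) t.
Proof. intros W hW hx. exists 1; split; [lra|]. auto. Qed.

Definition glue {Y : Type} (c : R) (f h : I -> Y) (t : I) : Y :=
  if Rle_dec (proj1_sig t) c then f t else h t.

Lemma glue_cont X c (f h : I -> pt X) t :
  (proj1_sig t <= c -> cont_at X f t) -> (c <= proj1_sig t -> cont_at X h t) ->
  (proj1_sig t = c -> f t = h t) -> cont_at X (glue c f h) t.
Proof.
  intros hf hh he W hW hWt. unfold glue in *.
  destruct (Rtotal_order (proj1_sig t) c) as [hlt|[heq|hgt]].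
  - destruct (Rle_dec (proj1_sig t) c); [|lra].
    destruct (hf ltac:(lra) W hW hWt) as [eps [he' Heps]].
    exists (Rmin eps (c - proj1_sig t)); split; [apply Rmin_glb_lt; lra|].
    intros u hu. pose proof (Rmin_l eps (c - proj1_sig t)); pose proof (Rmin_r eps (c - proj1_sig t)).
    apply Rabs_def2 in hu. destruct (Rle_dec (proj1_sig u) c); [apply Heps, Rabs_def1|]; lra.
  - destruct (Rle_dec (proj1_sig t) c); [|lra].
    destruct (hf ltac:(lra) W hW hWt) as [eps [he' Heps]].
    rewrite (he heq) in hWt. destruct (hh ltac:(lra) W hW hWt) as [eps2 [he2 Heps2]].
    exists (Rmin eps eps2); split; [apply Rmin_glb_lt; lra|].
    intros u hu. pose proof (Rmin_l eps eps2); pose proof (Rmin_r eps eps2).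
    destruct (Rle_dec (proj1_sig u) c); [apply Heps|apply Heps2]; lra.
  - destruct (Rle_dec (proj1_sig t) c); [lra|].
    destruct (hh ltac:(lra) W hW hWt) as [eps [he' Heps]].
    exists (Rmin eps (proj1_sig t - c)); split; [apply Rmin_glb_lt; lra|].
    intros u hu. pose proof (Rmin_l eps (proj1_sig t - c)); pose proof (Rmin_r eps (proj1_sig t - c)).
    apply Rabs_def2 in hu. destruct (Rle_dec (proj1_sig u) c); [|apply Heps, Rabs_def1]; lra.
Qed.

Section StreamFacts.
Variable X : PreStream.
Hypothesis HX : is_stream X.

Lemma opn_inter U V : opn X U -> opn X V -> opn X (fun x => U x /\ V x).
Proof. destruct HX as [[_ [_ h]] _]. apply h. Qed.

Lemma circ_dom V x y : opn X V -> circ X V x y -> V x /\ V y.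
Proof. intros hV. destruct HX as [_ [h _]]. apply (h V hV). Qed.

Lemma circ_refl V x : opn X V -> V x -> circ X V x x.
Proof. intros hV. destruct HX as [_ [h _]]. apply (h V hV). Qed.

Lemma circ_trans V x y z : opn X V -> circ X V x y -> circ X V y z -> circ X V x z.
Proof. intros hV. destruct HX as [_ [h _]]. apply (h V hV). Qed.

(* Circulations are monotone: apply the union axiom to the collection {U, V}. *)
Lemma circ_mono U V x y : opn X U -> opn X V -> (forall z, U z -> V z) ->
  circ X U x y -> circ X V x y.
Proof.
  intros hU hV hUV h. destruct HX as [_ [_ hun]].
  set (O := fun W => W = U \/ W = V).
  assert (hO : forall W, O W -> opn X W) by (intros W [->| ->]; auto).
  assert (e : bigunion O = V).
  { apply pred_ext; intros z; unfold bigunion, O; split.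
    - intros [W [[->| ->] hz]]; auto.
    - intros hz; exists V; auto. }
  rewrite <- e. apply (proj1 (hun O hO) U); auto. left; auto.
Qed.

Lemma circ_local V (R0 : pt X -> pt X -> Prop) : opn X V -> preorder_on V R0 ->
  (forall x, V x -> exists W, opn X W /\ W x /\ (forall y, W y -> V y) /\
     forall a b, circ X W a b -> R0 a b) ->
  forall a b, circ X V a b -> R0 a b.
Proof.
  intros hV hR hloc. destruct HX as [_ [_ hun]].
  set (O := fun W => opn X W /\ (forall y, W y -> V y) /\ forall a b, circ X W a b -> R0 a b).
  assert (hO : forall W, O W -> opn X W) by (intros W [h _]; auto).
  assert (e : bigunion O = V).
  { apply pred_ext; intros z; unfold bigunion, O; split.
    - intros [W [[_ [h _]] hz]]; auto.
    - intros hz. destruct (hloc z hz) as [W [h1 [h2 [h3 h4]]]]. exists W; auto. }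
  rewrite <- e. apply (proj2 (hun O hO)).
  - rewrite e; auto.
  - intros U [_ [_ h]]; auto.
Qed.

End StreamFacts.

Lemma stream_map_comp X Y Z (f : pt X -> pt Y) (g : pt Y -> pt Z) :
  stream_map X Y f -> stream_map Y Z g -> stream_map X Z (fun x => g (f x)).
Proof.
  intros [cf df] [cg dg]. split.
  - intros V hV. apply (cf (fun y => V (g y))). apply cg; auto.
  - intros V hV x y h. apply dg; [exact hV|].
    apply (df (fun y => V (g y))); [apply cg; exact hV|exact h].
Qed.

Lemma const_dipath X (x : pt X) : is_stream X -> dipath X (fun _ => x).
Proof.
  intros HX. split.
  - apply continuous_iff. intros t; apply const_cont.
  - intros V hV t1 t2 [h1 h2]. apply circ_refl; auto. apply (h2 t1); lra.
Qed.

Definition concat {Y : Type} (g1 g2 : I -> Y) : I -> Y :=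
  glue (1/2) (fun t => g1 (mkI (2 * proj1_sig t))) (fun t => g2 (mkI (2 * proj1_sig t - 1))).

Lemma concat_0 {Y} (g1 g2 : I -> Y) : concat g1 g2 I0 = g1 I0.
Proof. unfold concat, glue; simpl. destruct Rle_dec; [|lra]. f_equal. apply I_eq. rewrite mkI_val; simpl; lra. Qed.

Lemma concat_1 {Y} (g1 g2 : I -> Y) : concat g1 g2 I1 = g2 I1.
Proof. unfold concat, glue; simpl. destruct Rle_dec; [lra|]. f_equal. apply I_eq. rewrite mkI_val; simpl; lra. Qed.

Lemma concat_in {Y} (P : Y -> Prop) (g1 g2 : I -> Y) :
  (forall t, P (g1 t)) -> (forall t, P (g2 t)) -> forall t, P (concat g1 g2 t).
Proof. intros; unfold concat, glue; destruct Rle_dec; auto. Qed.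

Lemma concat_mid {Y} (g1 g2 : I -> Y) : g1 I1 = g2 I0 ->
  g1 (mkI (2 * (1/2))) = g2 (mkI (2 * (1/2) - 1)).
Proof.
  intros e. replace (mkI (2 * (1/2))) with I1 by (apply I_eq; rewrite mkI_val; simpl; lra).
  replace (mkI (2 * (1/2) - 1)) with I0 by (apply I_eq; rewrite mkI_val; simpl; lra). exact e.
Qed.

Lemma double_lip (c : R) (t u : I) :
  Rabs (proj1_sig (mkI (2 * proj1_sig u - c)) - proj1_sig (mkI (2 * proj1_sig t - c))) <=
  2 * Rabs (proj1_sig u - proj1_sig t).
Proof.
  eapply Rle_trans; [apply mkI_lip|].
  replace (2 * proj1_sig u - c - (2 * proj1_sig t - c)) with (2 * (proj1_sig u - proj1_sig t)) by ring.
  rewrite Rabs_mult, (Rabs_right 2); lra.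
Qed.

Lemma concat_cont X (g1 g2 : I -> pt X) : g1 I1 = g2 I0 ->
  (forall t, cont_at X g1 t) -> (forall t, cont_at X g2 t) ->
  forall t, cont_at X (concat g1 g2) t.
Proof.
  intros e12 c1 c2 t. apply glue_cont.
  - intros _. apply (cont_at_comp X g1 (fun t => mkI (2 * proj1_sig t)) 2); [lra| |apply c1].
    intros u. pose proof (double_lip 0 t u) as h. rewrite !Rminus_0_r in h. exact h.
  - intros _. apply (cont_at_comp X g2 (fun t => mkI (2 * proj1_sig t - 1)) 2); [lra| |apply c2].
    intros u. apply double_lip.
  - intros h. rewrite h. apply concat_mid; auto.
Qed.

Section ConcatDipath.
Variables (X : PreStream) (g1 g2 : I -> pt X) (W : pt X -> Prop) (t1 t2 : I).
Hypotheses (HX : is_stream X) (d1 : dipath X g1) (d2 : dipath X g2) (e12 : g1 I1 = g2 I0)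
  (hW : opn X W) (hin : forall t : I, proj1_sig t1 <= proj1_sig t <= proj1_sig t2 -> W (concat g1 g2 t)).

Lemma concat_circ_first a b : proj1_sig t1 <= a -> a <= b -> b <= 1/2 -> b <= proj1_sig t2 ->
  circ X W (g1 (mkI (2*a))) (g1 (mkI (2*b))).
Proof.
  intros ha hab hb hb2. pose proof (I_bnd t1). apply (proj2 d1); auto.
  split; [rewrite !mkI_val by lra; lra|]. intros t ht. rewrite !mkI_val in ht by lra.
  specialize (hin (mkI (proj1_sig t / 2))). rewrite mkI_val in hin by lra.
  specialize (hin ltac:(lra)). unfold concat, glue in hin. rewrite mkI_val in hin by lra.
  destruct Rle_dec; [|lra]. replace (mkI (2 * (proj1_sig t / 2))) with t in hin; auto.
  apply I_eq; rewrite mkI_val; [field|]. pose proof (I_bnd t); lra.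
Qed.

Lemma concat_circ_second a b : proj1_sig t1 <= a -> a <= b -> 1/2 <= a -> b <= proj1_sig t2 ->
  circ X W (g2 (mkI (2*a-1))) (g2 (mkI (2*b-1))).
Proof.
  intros ha hab hb hb2. pose proof (I_bnd t2). apply (proj2 d2); auto.
  split; [rewrite !mkI_val by lra; lra|]. intros t ht. rewrite !mkI_val in ht by lra.
  specialize (hin (mkI ((proj1_sig t + 1) / 2))). rewrite mkI_val in hin by lra.
  specialize (hin ltac:(lra)). unfold concat, glue in hin. rewrite mkI_val in hin by lra.
  destruct Rle_dec.
  - replace t with I0 by (apply I_eq; simpl; lra). rewrite <- e12.
    replace I1 with (mkI (2 * ((proj1_sig t + 1) / 2))) by (apply I_eq; rewrite mkI_val; simpl; lra).
    exact hin.
  - replace (mkI (2 * ((proj1_sig t + 1) / 2) - 1)) with t in hin; auto.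
    apply I_eq; rewrite mkI_val; [field|]. pose proof (I_bnd t); lra.
Qed.

Lemma concat_circ : proj1_sig t1 <= proj1_sig t2 -> circ X W (concat g1 g2 t1) (concat g1 g2 t2).
Proof.
  intros h12. unfold concat, glue. pose proof (I_bnd t1); pose proof (I_bnd t2).
  destruct (Rle_dec (proj1_sig t1) (1/2)); destruct (Rle_dec (proj1_sig t2) (1/2)).
  - apply concat_circ_first; lra.
  - apply circ_trans with (g1 (mkI (2 * (1/2)))); auto; [apply concat_circ_first; lra|].
    rewrite (concat_mid g1 g2 e12). apply concat_circ_second; lra.
  - lra.
  - apply concat_circ_second; lra.
Qed.

End ConcatDipath.

Lemma concat_dipath X (g1 g2 : I -> pt X) : is_stream X -> dipath X g1 -> dipath X g2 ->
  g1 I1 = g2 I0 -> dipath X (concat g1 g2).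
Proof.
  intros HX d1 d2 e12. split.
  - apply continuous_iff, concat_cont; auto; apply continuous_iff; [apply d1|apply d2].
  - intros W hW t1 t2 [h12 hin]. apply concat_circ; auto.
Qed.

Definition dreach (X : PreStream) (V : pt X -> Prop) (x y : pt X) : Prop :=
  exists g : I -> pt X, dipath X g /\ g I0 = x /\ g I1 = y /\ forall t, V (g t).

Lemma dreach_preorder X V : is_stream X -> preorder_on V (dreach X V).
Proof.
  intros HX. split; [|split].
  - intros x y [g [_ [<- [<- h]]]]. auto.
  - intros x hx. exists (fun _ => x). split; [apply const_dipath; auto|auto].
  - intros x y z [g1 [d1 [a1 [b1 i1]]]] [g2 [d2 [a2 [b2 i2]]]].
    exists (concat g1 g2). split; [apply concat_dipath; auto; congruence|].
    rewrite concat_0, concat_1. split; auto; split; auto. apply concat_in; auto.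
Qed.

Lemma path_ordered_local X : is_stream X ->
  (forall V x, opn X V -> V x -> exists W, opn X W /\ W x /\ (forall y, W y -> V y) /\
     forall a b, circ X W a b -> dreach X W a b) ->
  path_ordered X.
Proof.
  intros HX hloc V hV x y hxy.
  apply (circ_local X HX V (dreach X V) hV (dreach_preorder X V HX)); auto.
  intros z hz. destruct (hloc V z hV hz) as [W [hW [hWz [hWV hWd]]]].
  exists W; repeat split; auto.
  intros a b hab. destruct (hWd a b hab) as [g [dg [g0 [g1 gi]]]]. exists g; auto.
Qed.

Section Covering.
Variables (E B : PreStream) (rho : pt E -> pt B).
Hypotheses (HE : is_stream E) (HB : is_stream B) (cov : stream_covering E B rho).

Record sheet (V : pt B -> Prop) (U : pt E -> Prop) (sg : pt B -> pt E) : Prop := {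
  sheet_section : forall x, V x -> U (sg x) /\ rho (sg x) = x;
  sheet_retract : forall e, U e -> V (rho e) /\ sg (rho e) = e;
  sheet_open : forall W, opn E W -> opn B (fun x => V x /\ W (sg x));
  sheet_circ_up : forall W O, opn E W -> opn B O -> (forall x, O x -> V x /\ W (sg x)) ->
    forall x y, circ B O x y -> circ E W (sg x) (sg y);
  sheet_circ_down : forall W, opn E W -> (forall e, W e -> U e) ->
    forall e1 e2, circ E W e1 e2 -> circ B (fun x => V x /\ W (sg x)) (rho e1) (rho e2)
}.

Lemma sub_open_trace X (V W : pt X -> Prop) : opn X W -> opn (sub X V) (fun z => W (proj1_sig z)).
Proof. intros hW. exists W; split; auto. tauto. Qed.

Section SheetOfIso.
Variables (V : pt B -> Prop) (U : pt E -> Prop) (b : pt B)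
  (phi : pt (sub E U) -> pt (sub B V)) (psi : pt (sub B V) -> pt (sub E U)).
Hypotheses (hV : opn B V) (hU : opn E U) (hb : V b)
  (phi_rho : forall u, proj1_sig (phi u) = rho (proj1_sig u))
  (psi_phi : forall u, psi (phi u) = u) (phi_psi : forall y, phi (psi y) = y)
  (map_phi : stream_map (sub E U) (sub B V) phi) (map_psi : stream_map (sub B V) (sub E U) psi).

(* The inverse isomorphism psi, extended arbitrarily outside V. *)
Definition iso_section (x : pt B) : pt E :=
  match excluded_middle_informative (V x) with
  | left h => proj1_sig (psi (exist _ x h))
  | right _ => proj1_sig (psi (exist _ b hb))
  end.

Lemma iso_section_eq x (h : V x) : iso_section x = proj1_sig (psi (exist _ x h)).
Proof.
  unfold iso_section. destruct excluded_middle_informative as [h'|h']; [|contradiction].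
  do 3 f_equal. apply proof_irrelevance.
Qed.

Lemma iso_section_section x : V x -> U (iso_section x) /\ rho (iso_section x) = x.
Proof.
  intros h. rewrite (iso_section_eq x h). split; [apply proj2_sig|].
  rewrite <- phi_rho, phi_psi. reflexivity.
Qed.

Lemma iso_section_retract e : U e -> V (rho e) /\ iso_section (rho e) = e.
Proof.
  intros h. assert (hv : V (rho e)) by (pose proof (proj2_sig (phi (exist _ e h))) as hp; rewrite phi_rho in hp; exact hp).
  split; auto. rewrite (iso_section_eq _ hv).
  replace (exist (fun x => V x) (rho e) hv) with (phi (exist _ e h)).
  - rewrite psi_phi. reflexivity.
  - apply sig_eq. simpl. apply phi_rho.
Qed.

Lemma iso_section_open W : opn E W -> exists W0, opn B W0 /\
  forall x (h : V x), W0 x <-> W (iso_section x).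
Proof.
  intros hW. destruct (proj1 map_psi _ (sub_open_trace E U W hW)) as [W0 [hW0 eW0]].
  exists W0; split; auto. intros x h. rewrite (iso_section_eq x h).
  symmetry. apply (eW0 (exist _ x h)).
Qed.

Lemma iso_section_circ_up W O : opn E W -> opn B O -> (forall x, O x -> V x /\ W (iso_section x)) ->
  forall x y, circ B O x y -> circ E W (iso_section x) (iso_section y).
Proof.
  intros hW hO hOW x y hxy.
  destruct (circ_dom B HB O x y hO hxy) as [hx hy].
  destruct (hOW x hx) as [hvx _]. destruct (hOW y hy) as [hvy _].
  pose proof (proj2 map_psi _ (sub_open_trace E U W hW) (exist _ x hvx) (exist _ y hvy)) as D.
  simpl in D. rewrite (iso_section_eq x hvx), (iso_section_eq y hvy).
  apply (circ_mono E HE (fun z => exists h : U z, W z)); auto.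
  { replace (fun z => exists h : U z, W z) with (fun z => U z /\ W z)
      by (apply pred_ext; intros z; split; intros [h1 h2]; [exists h1|]; auto).
    apply opn_inter; auto. }
  { intros z [_ h]; exact h. }
  apply D. apply (circ_mono B HB O); auto.
  { destruct (iso_section_open W hW) as [W0 [hW0 eW0]].
    replace (fun z => exists h : V z, W (proj1_sig (psi (exist _ z h)))) with (fun z => V z /\ W0 z).
    - apply opn_inter; auto.
    - apply pred_ext; intros z; split.
      + intros [h1 h2]; exists h1; rewrite <- iso_section_eq; apply eW0; auto.
      + intros [h1 h2]; split; auto; apply (eW0 z h1); rewrite (iso_section_eq z h1); auto. }
  intros z hz. destruct (hOW z hz) as [h1 h2]. exists h1. rewrite <- iso_section_eq. auto.
Qed.

Lemma iso_section_circ_down W : opn E W -> (forall e, W e -> U e) ->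
  forall e1 e2, circ E W e1 e2 -> circ B (fun x => V x /\ W (iso_section x)) (rho e1) (rho e2).
Proof.
  intros hW hWU e1 e2 h.
  destruct (circ_dom E HE W e1 e2 hW h) as [h1 h2].
  destruct (iso_section_open W hW) as [W0 [hW0 eW0]].
  assert (hZ : opn (sub B V) (fun y => W (iso_section (proj1_sig y)))).
  { exists W0; split; auto. intros [y hy]; simpl. symmetry. exact (eW0 y hy). }
  pose proof (proj2 map_phi _ hZ (exist _ e1 (hWU e1 h1)) (exist _ e2 (hWU e2 h2))) as D.
  simpl in D. rewrite !phi_rho in D. simpl in D.
  replace (fun x => V x /\ W (iso_section x)) with (fun x => exists h : V x, W (iso_section x))
    by (apply pred_ext; intros z; split; intros [a c]; [|exists a]; auto).
  apply D.
  replace (fun z => exists h : U z, W (iso_section (proj1_sig (phi (exist _ z h))))) with W; auto.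
  apply pred_ext; intros z; split.
  - intros hw. exists (hWU z hw). rewrite phi_rho. simpl. rewrite (proj2 (iso_section_retract z (hWU z hw))). exact hw.
  - intros [hz hw]. rewrite phi_rho in hw. simpl in hw. rewrite (proj2 (iso_section_retract z hz)) in hw. exact hw.
Qed.

Lemma sheet_of_iso : sheet V U iso_section.
Proof.
  split.
  - exact iso_section_section.
  - exact iso_section_retract.
  - intros W hW. destruct (iso_section_open W hW) as [W0 [hW0 eW0]].
    replace (fun x => V x /\ W (iso_section x)) with (fun x => V x /\ W0 x).
    + apply opn_inter; auto.
    + apply pred_ext. intros x. split; intros [hx hw]; split; auto; apply (eW0 x hx); auto.
  - exact iso_section_circ_up.
  - exact iso_section_circ_down.
Qed.

End SheetOfIso.

Record even_cover (V : pt B -> Prop) (F : (pt E -> Prop) -> Prop) : Prop := {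
  ec_open : opn B V;
  ec_sheets_open : forall U, F U -> opn E U;
  ec_cover : forall e, V (rho e) -> exists U, F U /\ U e;
  ec_disjoint : forall U1 U2, F U1 -> F U2 -> forall e, U1 e -> U2 e -> forall e', U1 e' <-> U2 e';
  ec_sheet : forall U, F U -> exists sg, sheet V U sg
}.

Lemma even_cover_at b : exists V F, V b /\ even_cover V F.
Proof.
  destruct cov as [_ [_ hc]]. destruct (hc b) as [V [hV [hb [F [hF [hFV [hdis hiso]]]]]]].
  exists V, F. split; auto. split; auto.
  - intros e he. apply hFV in he. destruct he as [U [h1 h2]]. exists U; auto.
  - intros U hU. destruct (hiso U hU) as [phi [hp [psi [h1 [h2 [h3 h4]]]]]].
    exists (iso_section V U b psi hb). apply (sheet_of_iso V U b phi psi); auto.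
Qed.

Lemma sheet_through V F : even_cover V F -> forall e, V (rho e) ->
  exists U sg, F U /\ U e /\ sheet V U sg.
Proof.
  intros EC e he. destruct (ec_cover _ _ EC e he) as [U [hFU hU]].
  destruct (ec_sheet _ _ EC U hFU) as [sg S]. exists U, sg; auto.
Qed.

Lemma sheet_inj V U sg e1 e2 : sheet V U sg -> U e1 -> U e2 -> rho e1 = rho e2 -> e1 = e2.
Proof.
  intros S h1 h2 hr. rewrite <- (proj2 (sheet_retract _ _ _ S e1 h1)), hr.
  apply (sheet_retract _ _ _ S e2 h2).
Qed.

Lemma sheets_apart V F U1 U2 e1 e2 : even_cover V F -> F U1 -> F U2 -> U1 e1 -> U2 e2 ->
  rho e1 = rho e2 -> e1 <> e2 -> forall z, ~ (U1 z /\ U2 z).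
Proof.
  intros EC hF1 hF2 h1 h2 hr hne z [z1 z2]. apply hne.
  destruct (ec_sheet _ _ EC U1 hF1) as [sg S].
  apply (sheet_inj V U1 sg); auto.
  exact (proj2 (ec_disjoint _ _ EC U1 U2 hF1 hF2 z z1 z2 e2) h2).
Qed.

Lemma sheet_cont V U sg (gm : I -> pt B) t : sheet V U sg ->
  cont_at B gm t -> V (gm t) -> cont_at E (fun u => sg (gm u)) t.
Proof.
  intros S hg hvt W hW hWt.
  destruct (hg _ (sheet_open _ _ _ S W hW) (conj hvt hWt)) as [eps [he H]].
  exists eps; split; auto. intros u hu. apply (H u hu).
Qed.

Lemma sheet_cont2 V U sg (H : I * I -> pt B) (p : I * I) : sheet V U sg ->
  cont2 B H p -> V (H p) -> cont2 E (fun q => sg (H q)) p.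
Proof.
  intros S hg hvt W hW hWt.
  destruct (hg _ (sheet_open _ _ _ S W hW) (conj hvt hWt)) as [eps [he H']].
  exists eps; split; auto. intros u h1 h2. apply (H' u h1 h2).
Qed.

(* Uniqueness of lifts of paths: the agreement set is clopen in I. *)
Lemma lift_unique (f f' : I -> pt E) : (forall t, cont_at E f t) -> (forall t, cont_at E f' t) ->
  (forall t, rho (f t) = rho (f' t)) -> f I0 = f' I0 -> forall t, f t = f' t.
Proof.
  intros cf cf' hr h0 t.
  apply (I_connected 0 1 (fun t => f t = f' t)); try lra; [| | |apply I_bnd].
  - intros t0 ht0. replace t0 with I0; auto. apply I_eq; simpl; auto.
  - intros u _ hu. destruct (even_cover_at (rho (f u))) as [V [F [hb EC]]].
    destruct (sheet_through V F EC (f u) hb) as [U [sg [hFU [hUu S]]]].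
    pose proof (ec_sheets_open _ _ EC U hFU) as hU.
    destruct (cf u U hU hUu) as [e1 [he1 H1]].
    rewrite hu in hUu. destruct (cf' u U hU hUu) as [e2 [he2 H2]].
    exists (Rmin e1 e2); split; [apply Rmin_glb_lt; lra|]. intros v _ hv.
    pose proof (Rmin_l e1 e2); pose proof (Rmin_r e1 e2).
    apply (sheet_inj V U sg); auto; [apply H1|apply H2]; lra.
  - intros u _ hu. destruct (even_cover_at (rho (f u))) as [V [F [hb EC]]].
    destruct (ec_cover _ _ EC (f u) hb) as [U1 [hF1 hU1]].
    destruct (ec_cover _ _ EC (f' u) ltac:(rewrite <- hr; auto)) as [U2 [hF2 hU2]].
    pose proof (sheets_apart V F U1 U2 _ _ EC hF1 hF2 hU1 hU2 (hr u) hu) as dj.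
    destruct (cf u U1 (ec_sheets_open _ _ EC U1 hF1) hU1) as [e1 [he1 H1]].
    destruct (cf' u U2 (ec_sheets_open _ _ EC U2 hF2) hU2) as [e2 [he2 H2]].
    exists (Rmin e1 e2); split; [apply Rmin_glb_lt; lra|]. intros v _ hv heq.
    pose proof (Rmin_l e1 e2); pose proof (Rmin_r e1 e2).
    apply (dj (f v)). split; [apply H1; lra|]. rewrite heq. apply H2; lra.
Qed.

Lemma stay_in_sheet V F U (f : I -> pt E) x z : even_cover V F -> F U ->
  (forall t, cont_at E f t) -> 0 <= x <= z -> z <= 1 ->
  (forall t, x <= proj1_sig t <= z -> V (rho (f t))) ->
  U (f (mkI x)) -> forall t, x <= proj1_sig t <= z -> U (f t).
Proof.
  intros EC hFU cf hx hz hV hU0.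
  apply (I_connected x z (fun t => U (f t))); auto.
  - intros t ht. replace t with (mkI x); auto. apply I_eq; rewrite mkI_val; lra.
  - intros u _ hu. destruct (cf u U (ec_sheets_open _ _ EC U hFU) hu) as [e1 [he1 H1]].
    exists e1; split; auto.
  - intros u hu nu. destruct (ec_cover _ _ EC (f u) (hV u hu)) as [U' [hF' hU']].
    destruct (cf u U' (ec_sheets_open _ _ EC U' hF') hU') as [e1 [he1 H1]]. exists e1; split; auto.
    intros v _ hv hUv. apply nu.
    apply (proj1 (ec_disjoint _ _ EC U' U hF' hFU (f v) (H1 v hv) hUv (f u))). exact hU'.
Qed.

Definition lifts_upto (gm : I -> pt B) (e : pt E) (r : R) : Prop :=
  exists f, (forall t, cont_at E f t) /\ f I0 = e /\
    forall t, proj1_sig t <= r -> rho (f t) = gm t.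

(* Near any u, a partial lift on [0,x] extends to [0,y]: continue it by the
   section of a sheet over an evenly covered neighbourhood of gm u. *)
Lemma lifts_upto_step (gm : I -> pt B) e (u : I) : (forall t, cont_at B gm t) ->
  exists eta, eta > 0 /\ forall x y, 0 <= x <= y -> y <= 1 ->
    Rabs (x - proj1_sig u) < eta -> Rabs (y - proj1_sig u) < eta ->
    lifts_upto gm e x -> lifts_upto gm e y.
Proof.
  intros cg. destruct (even_cover_at (gm u)) as [V [F [hb EC]]].
  destruct (cg u V (ec_open _ _ EC) hb) as [eta [heta Heta]]. exists eta; split; auto.
  intros x y hxy hy hx hy' [f [cf [f0 fl]]].
  set (tx := mkI x).
  assert (htx : proj1_sig tx = x) by (apply mkI_val; lra).
  assert (lx : rho (f tx) = gm tx) by (apply fl; lra).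
  assert (vx : V (rho (f tx))) by (rewrite lx; apply Heta; rewrite htx; auto).
  destruct (sheet_through V F EC _ vx) as [U [sg [_ [hU S]]]].
  set (r := fun t : I => mkI (clamp x y (proj1_sig t))).
  assert (inV : forall t : I, V (gm (r t))).
  { intros t. apply Heta. pose proof (clamp_bnd x y (proj1_sig t) ltac:(lra)).
    unfold r. rewrite mkI_val by lra.
    apply Rabs_def2 in hx; apply Rabs_def2 in hy'. apply Rabs_def1; lra. }
  assert (r_id : forall t : I, x <= proj1_sig t <= y -> r t = t).
  { intros t ht. unfold r. rewrite clamp_id by lra. apply mkI_proj. }
  exists (glue x f (fun t => sg (gm (r t)))). split; [|split].
  - intros t. apply glue_cont; auto.
    + intros _. apply (sheet_cont V U sg (fun t => gm (r t))); auto.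
      apply (cont_at_comp B gm r 1); [lra| |apply cg].
      intros u'. eapply Rle_trans; [apply mkI_lip|]. rewrite Rmult_1_l. apply clamp_lip; lra.
    + intros ht. replace t with tx by (apply I_eq; lra).
      rewrite r_id by lra. rewrite <- lx. symmetry; apply (sheet_retract _ _ _ S); auto.
  - unfold glue; simpl. destruct Rle_dec; [auto|lra].
  - intros t ht. unfold glue. destruct Rle_dec; [apply fl; auto|].
    rewrite <- (r_id t) at 2 by lra. apply (sheet_section _ _ _ S), inV.
Qed.

Lemma path_lift (gm : I -> pt B) (e : pt E) : (forall t, cont_at B gm t) -> rho e = gm I0 ->
  exists f, (forall t, cont_at E f t) /\ f I0 = e /\ forall t, rho (f t) = gm t.
Proof.
  intros cg he.
  assert (L1 : lifts_upto gm e 1).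
  { apply interval_induction.
    - exists (fun _ => e). split; [intros; apply const_cont|split; auto].
      intros t ht. replace t with I0; auto. apply I_eq; pose proof (I_bnd t); simpl; lra.
    - intros r r' hr [f [h1 [h2 h3]]]. exists f; split; auto; split; auto.
      intros t ht; apply h3; lra.
    - intros u hu. destruct (lifts_upto_step gm e (mkI u) cg) as [eta [heta Heta]].
      rewrite mkI_val in Heta by lra. eauto. }
  destruct L1 as [f [h1 [h2 h3]]]. exists f; split; auto; split; auto.
  intros t; apply h3. apply I_bnd.
Qed.

Lemma nbhd_in_range (x t c : R) : 0 <= x <= t -> t < c -> (x = 0 \/ x < t) ->
  exists m, m > 0 /\ forall r, 0 <= r -> Rabs (r - t) < m -> x <= r < c.
Proof.
  intros hx hc [x0|hxt].
  - exists (c - t); split; [lra|]. intros r hr hrt. apply Rabs_def2 in hrt. lra.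
  - exists (Rmin (t - x) (c - t)); split; [apply Rmin_glb_lt; lra|].
    intros r hr hrt. apply Rabs_def2 in hrt.
    pose proof (Rmin_l (t - x) (c - t)); pose proof (Rmin_r (t - x) (c - t)). lra.
Qed.

Section JointContinuity.
Variables (H : I * I -> pt B) (L0 : I -> pt E) (fs : I -> I -> pt E).
Hypotheses (cH : forall p, cont2 B H p) (cL0 : forall s, cont_at E L0 s)
  (cfs : forall s t, cont_at E (fs s) t) (fs_0 : forall s, fs s I0 = L0 s)
  (fs_rho : forall s t, rho (fs s t) = H (s, t)).

Definition lifted (p : I * I) : pt E := fs (fst p) (snd p).

Definition cont_below (s0 : I) (r : R) : Prop :=
  exists d, d > 0 /\ forall s t : I, Rabs (proj1_sig s - proj1_sig s0) < d ->
    proj1_sig t <= r -> cont2 E lifted (s, t).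

Lemma start_near s0 x U : 0 <= x <= 1 -> (x = 0 \/ cont_below s0 x) -> opn E U ->
  U (fs s0 (mkI x)) -> exists d, d > 0 /\
    (forall s : I, Rabs (proj1_sig s - proj1_sig s0) < d -> U (fs s (mkI x))) /\
    (0 < x -> forall s t : I, Rabs (proj1_sig s - proj1_sig s0) < d ->
       proj1_sig t <= x -> cont2 E lifted (s, t)).
Proof.
  intros hx [x0|[d1 [hd1 Hd1]]] hU hUx.
  - assert (e0 : mkI x = I0) by (apply I_eq; rewrite mkI_val; simpl; lra).
    rewrite e0, fs_0 in hUx. destruct (cL0 s0 U hU hUx) as [eps [he Heps]].
    exists eps; split; auto; split; [|intros; lra].
    intros s hs. rewrite e0, fs_0. apply Heps; auto.
  - assert (c0 : cont2 E lifted (s0, mkI x))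
      by (apply Hd1; [rewrite Rminus_diag, Rabs_R0|rewrite mkI_val]; lra).
    destruct (c0 U hU hUx) as [eps [he Heps]].
    exists (Rmin eps d1); split; [apply Rmin_glb_lt; lra|].
    pose proof (Rmin_l eps d1); pose proof (Rmin_r eps d1). split.
    + intros s hs. apply (Heps (s, mkI x)); simpl; [lra|rewrite Rminus_diag, Rabs_R0; lra].
    + intros _ s t hs ht. apply Hd1; auto; lra.
Qed.

(* The continuation step: near height u, on a strip around s0 the lift
   coincides with sg o H for the section sg of one sheet. *)
Lemma cont_below_step s0 (u : I) : exists eta, eta > 0 /\ forall x y, 0 <= x <= y -> y <= 1 ->
  Rabs (x - proj1_sig u) < eta -> Rabs (y - proj1_sig u) < eta ->
  (x = 0 \/ cont_below s0 x) -> cont_below s0 y.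
Proof.
  destruct (even_cover_at (H (s0, u))) as [V [F [hb EC]]].
  destruct (cH (s0, u) V (ec_open _ _ EC) hb) as [eta0 [heta0 inV]]. simpl in inV.
  exists (eta0 / 2); split; [lra|]. intros x y hxy hy hx hy' hxQ.
  apply Rabs_def2 in hx; apply Rabs_def2 in hy'.
  assert (vx : V (rho (fs s0 (mkI x)))).
  { rewrite fs_rho. apply inV; cbn [fst snd]; [rewrite Rminus_diag, Rabs_R0; lra|rewrite mkI_val by lra; apply Rabs_def1; lra]. }
  destruct (sheet_through V F EC _ vx) as [U [sg [hFU [hU S]]]].
  destruct (start_near s0 x U ltac:(lra) hxQ (ec_sheets_open _ _ EC U hFU) hU)
    as [d2 [hd2 [start below]]].
  set (d3 := Rmin d2 eta0).
  assert (hd3 : d3 > 0 /\ d3 <= d2 /\ d3 <= eta0)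
    by (unfold d3; split; [apply Rmin_glb_lt; lra|split; [apply Rmin_l|apply Rmin_r]]).
  assert (local_form : forall s t : I, Rabs (proj1_sig s - proj1_sig s0) < d3 ->
            x <= proj1_sig t < proj1_sig u + eta0 / 2 -> lifted (s, t) = sg (H (s, t))).
  { intros s t hs ht. unfold lifted; simpl. pose proof (I_bnd t).
    assert (inU : U (fs s t)).
    { apply (stay_in_sheet V F U (fs s) x (proj1_sig t) EC hFU (cfs s)); try lra.
      - intros t' ht'. rewrite fs_rho. apply inV; simpl; [lra|apply Rabs_def1; lra].
      - apply start; lra. }
    rewrite <- fs_rho. symmetry. apply (sheet_retract _ _ _ S); auto. }
  exists (d3 / 2); split; [lra|]. intros s t hs ht. pose proof (I_bnd t).
  destruct (Rle_dec (proj1_sig t) x); [destruct (Rlt_dec 0 x)|].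
  1: { apply below; auto; lra. }
  all: destruct (nbhd_in_range x (proj1_sig t) (proj1_sig u + eta0 / 2)) as [m [hm Hm]]; try lra.
  all: apply (cont2_local E lifted (fun q => sg (H q)) (s, t) (Rmin m (d3 / 2)));
    [apply Rmin_glb_lt; lra| |].
  all: try (apply (sheet_cont2 V U sg); auto; apply inV; simpl;
            [lra|apply Rabs_def2 in hs; apply Rabs_def1; lra]).
  all: intros [s' t'] h1 h2; simpl in h1, h2.
  all: pose proof (Rmin_l m (d3 / 2)); pose proof (Rmin_r m (d3 / 2)).
  all: apply local_form; [apply Rabs_def2 in hs; apply Rabs_def2 in h1; apply Rabs_def1; lra|].
  all: apply Hm; [apply I_bnd|lra].
Qed.

Lemma joint_cont : forall p, cont2 E lifted p.
Proof.
  intros [s0 t0].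
  assert (Q1 : 1 <= 0 \/ cont_below s0 1).
  { apply interval_induction; [left; lra| |].
    - intros r r' hr [h|[d [hd h]]]; [left; lra|right].
      exists d; split; auto. intros s t h1 h2; apply h; auto; lra.
    - intros u hu. destruct (cont_below_step s0 (mkI u)) as [eta [heta Heta]].
      rewrite mkI_val in Heta by lra. exists eta; split; auto.
      intros x y hxy hy hx hy' hxQ. right. apply (Heta x y); auto.
      destruct hxQ; [left; lra|right; auto]. }
  destruct Q1 as [|[d [hd Hd]]]; [lra|].
  apply Hd; [rewrite Rminus_diag, Rabs_R0; lra|apply I_bnd].
Qed.

End JointContinuity.

(* Lifting of continuous maps of the square: lift the bottom edge, then every
   vertical path from the lifted bottom edge; joint continuity does the rest. *)
Lemma square_lift (H : I * I -> pt B) (e : pt E) : (forall p, cont2 B H p) -> rho e = H (I0, I0) ->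
  exists Ht, (forall p, cont2 E Ht p) /\ (forall p, rho (Ht p) = H p) /\ Ht (I0, I0) = e.
Proof.
  intros cH he.
  destruct (path_lift (fun s => H (s, I0)) e (fun s => slice_cont_fst B H s I0 (cH _)) he)
    as [L0 [cL0 [L00 lL0]]].
  assert (vertical : forall s, {f : I -> pt E | (forall t, cont_at E f t) /\ f I0 = L0 s /\
                                 forall t, rho (f t) = H (s, t)}).
  { intros s. apply constructive_indefinite_description.
    apply (path_lift (fun t => H (s, t)) (L0 s)); [|apply lL0].
    intros t. apply slice_cont, cH. }
  set (fs := fun s => proj1_sig (vertical s)).
  assert (cfs : forall s t, cont_at E (fs s) t) by (intros s; apply (proj2_sig (vertical s))).
  assert (fs_0 : forall s, fs s I0 = L0 s) by (intros s; apply (proj2_sig (vertical s))).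
  assert (fs_rho : forall s t, rho (fs s t) = H (s, t)) by (intros s; apply (proj2_sig (vertical s))).
  exists (lifted fs). split; [|split].
  - apply (joint_cont H L0 fs); auto.
  - intros [s t]. apply fs_rho.
  - unfold lifted; simpl. rewrite fs_0. exact L00.
Qed.

Definition segment (p0 p : I * I) (u : I) : I * I :=
  (mkI (proj1_sig (fst p0) + proj1_sig u * (proj1_sig (fst p) - proj1_sig (fst p0))),
   mkI (proj1_sig (snd p0) + proj1_sig u * (proj1_sig (snd p) - proj1_sig (snd p0)))).

Lemma segment_lip (a b u u' : I) :
  Rabs (proj1_sig (mkI (proj1_sig a + proj1_sig u' * (proj1_sig b - proj1_sig a))) -
        proj1_sig (mkI (proj1_sig a + proj1_sig u * (proj1_sig b - proj1_sig a)))) <=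
  1 * Rabs (proj1_sig u' - proj1_sig u).
Proof.
  eapply Rle_trans; [apply mkI_lip|].
  replace (proj1_sig a + proj1_sig u' * (proj1_sig b - proj1_sig a)
           - (proj1_sig a + proj1_sig u * (proj1_sig b - proj1_sig a)))
    with ((proj1_sig u' - proj1_sig u) * (proj1_sig b - proj1_sig a)) by ring.
  rewrite Rabs_mult, Rmult_1_l. rewrite <- (Rmult_1_r (Rabs (proj1_sig u' - proj1_sig u))) at 2.
  apply Rmult_le_compat_l; [apply Rabs_pos|]. pose proof (I_bnd a); pose proof (I_bnd b).
  apply Rabs_le; lra.
Qed.

Lemma segment_ends (p0 p : I * I) : segment p0 p I0 = p0 /\ segment p0 p I1 = p.
Proof.
  destruct p0 as [a b], p as [c d]. unfold segment; simpl.
  split; f_equal; rewrite <- mkI_proj; f_equal; ring.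
Qed.

(* Uniqueness of lifts of maps of the square: restrict to segments from p0. *)
Lemma square_lift_unique (Ht Ht' : I * I -> pt E) (p0 : I * I) :
  (forall p, cont2 E Ht p) -> (forall p, cont2 E Ht' p) ->
  (forall p, rho (Ht p) = rho (Ht' p)) -> Ht p0 = Ht' p0 -> forall p, Ht p = Ht' p.
Proof.
  intros c c' hr h0 p. destruct (segment_ends p0 p) as [e0 e1].
  assert (along : forall G, (forall p, cont2 E G p) -> forall u, cont_at E (fun u => G (segment p0 p u)) u).
  { intros G cG u. apply (cont2_comp E G (segment p0 p) 1 u); [lra| | |apply cG];
      intros; apply segment_lip. }
  rewrite <- e1. apply (lift_unique _ _ (along Ht c) (along Ht' c')); [intros; apply hr|].
  simpl. rewrite e0. exact h0.
Qed.

(* A continuous lift of a dipath runs, near each parameter u, inside any open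
   W around its value in the direction of the circulation: near u it is
   sg o rho o f for a section sg, which carries <=_O to <=_W. *)
Lemma lift_locally_directed (f : I -> pt E) W (u : I) : (forall t, cont_at E f t) ->
  dipath B (fun t => rho (f t)) -> opn E W -> W (f u) ->
  exists eps, eps > 0 /\ forall v1 v2 : I,
    Rabs (proj1_sig v1 - proj1_sig u) < eps -> Rabs (proj1_sig v2 - proj1_sig u) < eps ->
    proj1_sig v1 <= proj1_sig v2 -> circ E W (f v1) (f v2).
Proof.
  intros cf [_ df] hW hWu.
  destruct (even_cover_at (rho (f u))) as [V [F [hb EC]]].
  destruct (sheet_through V F EC _ hb) as [U [sg [hFU [hU S]]]].
  destruct (cf u (fun x => U x /\ W x) (opn_inter E HE U W (ec_sheets_open _ _ EC U hFU) hW)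
    (conj hU hWu)) as [eps [he near]].
  exists eps; split; auto. intros v1 v2 h1 h2 h12.
  pose proof (sheet_open _ _ _ S W hW) as hO.
  assert (back : forall t : I, Rabs (proj1_sig t - proj1_sig u) < eps -> sg (rho (f t)) = f t)
    by (intros t ht; apply (sheet_retract _ _ _ S), near, ht).
  rewrite <- (back v1 h1), <- (back v2 h2).
  apply (sheet_circ_up _ _ _ S W (fun x => V x /\ W (sg x)) hW hO (fun x h => h)).
  apply (df _ hO). split; auto. intros t ht.
  assert (htu : Rabs (proj1_sig t - proj1_sig u) < eps).
  { apply Rabs_def2 in h1; apply Rabs_def2 in h2; apply Rabs_def1; lra. }
  split; [apply (sheet_retract _ _ _ S), near, htu|]. rewrite (back t htu). apply near, htu.
Qed.

(* A continuous lift of a dipath is a dipath: from the local statement, by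
   connectedness of [t1,t2]. *)
Lemma lift_dipath (f : I -> pt E) : (forall t, cont_at E f t) ->
  dipath B (fun t => rho (f t)) -> dipath E f.
Proof.
  intros cf df. split; [apply continuous_iff; auto|].
  intros W hW t1 t2 [h12 hin]. cbn beta in hin.
  set (P := fun t : I => forall w : I, proj1_sig t1 <= proj1_sig w <= proj1_sig t -> circ E W (f t1) (f w)).
  enough (P t2) by (apply H; lra).
  apply (I_connected (proj1_sig t1) (proj1_sig t2) P); [pose proof (I_bnd t1); lra|apply I_bnd| | | |lra].
  - intros t ht w hw. replace w with t1 by (apply I_eq; lra). apply circ_refl; auto. apply hin; lra.
  - intros u hu Pu. destruct (lift_locally_directed f W u cf df hW (hin u hu)) as [eps [he near]].
    exists eps; split; auto. intros v hv hvu w hw.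
    destruct (Rle_dec (proj1_sig w) (proj1_sig u)); [apply Pu; lra|].
    apply circ_trans with (f u); auto; [apply Pu; lra|]. apply near; try lra.
    + rewrite Rminus_diag, Rabs_R0; lra.
    + apply Rabs_def2 in hvu; apply Rabs_def1; lra.
  - intros u hu Pu. destruct (lift_locally_directed f W u cf df hW (hin u hu)) as [eps [he near]].
    exists eps; split; auto. intros v hv hvu Pv. apply Pu. intros w hw.
    destruct (Rle_dec (proj1_sig w) (proj1_sig v)); [apply Pv; lra|].
    destruct (Rle_dec (proj1_sig u) (proj1_sig v)); [apply Pv; lra|].
    apply circ_trans with (f v); auto; [apply Pv; lra|]. apply near; try lra; auto.
    apply Rabs_def2 in hvu; apply Rabs_def1; lra.
Qed.

(* Path-orderedness descends: over a sheet, <=_W in B is the image under rho of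
   a circulation in E, realized by a dipath there whose image is a dipath. *)
Lemma path_ordered_down : path_ordered E -> path_ordered B.
Proof.
  intros PE. apply path_ordered_local; auto. intros V b hV hbV.
  destruct (even_cover_at b) as [Vb [F [hb EC]]].
  destruct (proj1 (proj2 cov) b) as [e he].
  destruct (sheet_through Vb F EC e ltac:(rewrite he; auto)) as [U [sg [hFU [_ S]]]].
  pose proof (opn_inter B HB V Vb hV (ec_open _ _ EC)) as hW.
  exists (fun y => V y /\ Vb y). repeat split; auto; [tauto|]. intros a c hac.
  set (WE := fun e => U e /\ V (rho e)).
  assert (hWE : opn E WE)
    by (apply (opn_inter E HE); [apply (ec_sheets_open _ _ EC U hFU)|apply (proj1 (proj1 cov)), hV]).
  assert (D : circ E WE (sg a) (sg c)).
  { apply (sheet_circ_up _ _ _ S WE (fun y => V y /\ Vb y) hWE hW); auto.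
    intros z [hz1 hz2]. destruct (sheet_section _ _ _ S z hz2) as [h1 h2].
    unfold WE. rewrite h2. auto. }
  destruct (circ_dom B HB _ a c hW hac) as [[_ ha] [_ hc]].
  destruct (PE _ hWE _ _ D) as [g [dg [g0 [g1 gi]]]].
  exists (fun t => rho (g t)). split; [apply (stream_map_comp vec_I E B g rho dg (proj1 cov))|].
  rewrite g0, g1, (proj2 (sheet_section _ _ _ S a ha)), (proj2 (sheet_section _ _ _ S c hc)).
  split; [auto|split; [auto|]]. intros t. destruct (gi t) as [hUt hVt].
  split; [exact hVt|apply (sheet_retract _ _ _ S), hUt].
Qed.

(* Path-orderedness lifts: push <=_W down by rho, realize it by a dipath in B,
   and lift that dipath with the section of the sheet. *)
Lemma path_ordered_up : path_ordered B -> path_ordered E.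
Proof.
  intros PB. apply path_ordered_local; auto. intros V e hV heV.
  destruct (even_cover_at (rho e)) as [Vb [F [hb EC]]].
  destruct (sheet_through Vb F EC e hb) as [U [sg [hFU [hU S]]]].
  assert (hW : opn E (fun z => V z /\ U z)) by (apply opn_inter; auto; apply (ec_sheets_open _ _ EC U hFU)).
  exists (fun z => V z /\ U z). repeat split; auto; [tauto|]. intros a c hac.
  destruct (circ_dom E HE _ a c hW hac) as [[_ ha] [_ hc]].
  pose proof (sheet_circ_down _ _ _ S _ hW ltac:(intros z [_ hz]; exact hz) a c hac) as D.
  destruct (PB _ (sheet_open _ _ _ S _ hW) _ _ D) as [g [dg [g0 [g1 gi]]]].
  exists (fun t => sg (g t)). split; [|split; [|split]].
  - apply lift_dipath.
    + intros t. apply (sheet_cont Vb U sg g t S); [|apply gi].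
      apply continuous_iff. apply dg.
    + replace (fun t => rho (sg (g t))) with g; auto.
      apply functional_extensionality; intros t. symmetry. apply (sheet_section _ _ _ S), gi.
  - rewrite g0. apply (sheet_retract _ _ _ S); auto.
  - rewrite g1. apply (sheet_retract _ _ _ S); auto.
  - intros t. apply gi.
Qed.

Lemma dihomotopy_of_lift (H : I * I -> pt B) (Ht : I * I -> pt E) : dihomotopy B H ->
  (forall p, cont2 E Ht p) -> (forall p, rho (Ht p) = H p) -> dihomotopy E Ht.
Proof.
  intros [_ dH] c l. split; [apply sq_continuous_iff; auto|].
  intros s. apply lift_dipath.
  - intros t. apply slice_cont, c.
  - replace (fun t => rho (Ht (s, t))) with (fun t => H (s, t)); [apply dH|].
    apply functional_extensionality; intros t; symmetry; auto.
Qed.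

Lemma dihomotopy_lift (H : I * I -> pt B) (p0 : I * I) (e : pt E) : dihomotopy B H ->
  (exists Ht, (forall p, cont2 E Ht p) /\ (forall p, rho (Ht p) = H p) /\ Ht p0 = e) ->
  exists Ht : I * I -> pt E,
    (dihomotopy E Ht /\ (forall p, rho (Ht p) = H p) /\ Ht p0 = e) /\
    forall Ht' : I * I -> pt E,
      dihomotopy E Ht' -> (forall p, rho (Ht' p) = H p) -> Ht' p0 = e ->
      forall p, Ht' p = Ht p.
Proof.
  intros dH [Ht [c [l h0]]]. exists Ht. split; [split; [apply (dihomotopy_of_lift H); auto|auto]|].
  intros Ht' [c0' _] l' h0'. pose proof (proj1 (sq_continuous_iff E Ht') c0') as c'.
  apply (square_lift_unique Ht' Ht p0 c' c); [intros q; rewrite l, l'; auto|congruence].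
Qed.

End Covering.

Definition reverse (t : I) : I := mkI (1 - proj1_sig t).

Lemma reverse_val t : proj1_sig (reverse t) = 1 - proj1_sig t.
Proof. unfold reverse. apply mkI_val. pose proof (I_bnd t); lra. Qed.

Lemma reverse_involutive t : reverse (reverse t) = t.
Proof. apply I_eq. rewrite !reverse_val. ring. Qed.

Lemma reverse_I0 : reverse I0 = I1.
Proof. apply I_eq. rewrite reverse_val. simpl. ring. Qed.

Lemma reverse_cont2 X (G : I * I -> pt X) : (forall p, cont2 X G p) ->
  forall p, cont2 X (fun p => G (fst p, reverse (snd p))) p.
Proof.
  intros c p W hW hWp. destruct (c _ W hW hWp) as [eps [he Heps]]. exists eps; split; auto.
  intros q h1 h2. apply Heps; cbn [fst snd]; auto.
  rewrite !reverse_val. replace (1 - proj1_sig (snd q) - (1 - proj1_sig (snd p)))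
    with (- (proj1_sig (snd q) - proj1_sig (snd p))) by ring. rewrite Rabs_Ropp; auto.
Qed.

(* Lifting through the top-left corner: lift the vertically reversed map
   through the bottom-left corner and reverse back. *)
Lemma square_lift_top E B (rho : pt E -> pt B) (H : I * I -> pt B) (e : pt E) :
  is_stream E -> is_stream B -> stream_covering E B rho ->
  (forall p, cont2 B H p) -> rho e = H (I0, I1) ->
  exists Ht, (forall p, cont2 E Ht p) /\ (forall p, rho (Ht p) = H p) /\ Ht (I0, I1) = e.
Proof.
  intros HE HB cov cH he.
  destruct (square_lift E B rho HE HB cov (fun p => H (fst p, reverse (snd p))) e
    (reverse_cont2 B H cH)) as [K [cK [lK K0]]]; [simpl; rewrite reverse_I0; auto|].
  exists (fun p => K (fst p, reverse (snd p))). split; [apply reverse_cont2; auto|split].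
  - intros [s t]. rewrite lK. simpl. rewrite reverse_involutive. auto.
  - simpl. rewrite <- reverse_I0, reverse_involutive. auto.
Qed.


Theorem mainTheorem12 (E B : PreStream) (rho : pt E -> pt B) :
  is_stream E -> is_stream B -> stream_covering E B rho ->
  (path_ordered E <-> path_ordered B) /\
  (forall e : pt E,
    (forall H : I * I -> pt B, dihomotopy B H -> H (I0, I0) = rho e ->
       exists Ht : I * I -> pt E,
         (dihomotopy E Ht /\ (forall p, rho (Ht p) = H p) /\ Ht (I0, I0) = e) /\
         forall Ht' : I * I -> pt E,
           dihomotopy E Ht' -> (forall p, rho (Ht' p) = H p) -> Ht' (I0, I0) = e ->
           forall p, Ht' p = Ht p) /\
    (forall H : I * I -> pt B, dihomotopy B H -> H (I0, I1) = rho e ->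
       exists Ht : I * I -> pt E,
         (dihomotopy E Ht /\ (forall p, rho (Ht p) = H p) /\ Ht (I0, I1) = e) /\
         forall Ht' : I * I -> pt E,
           dihomotopy E Ht' -> (forall p, rho (Ht' p) = H p) -> Ht' (I0, I1) = e ->
           forall p, Ht' p = Ht p)).
Proof.
  intros HE HB cov. split.
  - split; [apply (path_ordered_down E B rho)|apply (path_ordered_up E B rho)]; auto.
  - intros e. split; intros H dH h0; apply (dihomotopy_lift E B rho HE HB cov); auto;
      pose proof (proj1 (sq_continuous_iff B H) (proj1 dH)) as cH.
    + apply (square_lift E B rho HE HB cov H e cH). auto.
    + apply (square_lift_top E B rho H e HE HB cov cH). auto.
Qed.
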